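(* For every normed plane $(V,\|\cdot\|)$, $$0\le c_S(\|\cdot\|)\le\frac83.$$ Moreover, $c_S(\|\cdot\|)=0$ if and only if the norm is derived from an inner product, and $c_S(\|\cdot\|)=\frac83$ if and only if the plane is rectilinear.
   Context: A normed (Minkowski) plane $(V,\|\cdot\|)$ is a two-dimensional real vector space with a norm; $S=\{v:\|v\|=1\}$ is its unit circle. For nonzero $x,y$, $x$ is Birkhoff orthogonal to $y$, written $x\dashv_B y$, if $\|x+ty\|\ge\|x\|$ for all $t\in\mathbb{R}$ (this forces $x,y$ to be linearly independent). For linearly independent $x,y\in V$, $T_{xy}:V\to V$ is the linear map with $T_{xy}(x)=x$ and $T_{xy}(y)=-y$. The constant $c_S$ is $$c_S(\|\cdot\|)=\sup_{x\dashv_B y}\Big(\sup_{z\in T_{xy}(S)}\|z\|-\inf_{w\in T_{xy}(S)}\|w\|\Big),$$ the outer supremum over all nonzero $x,y\in V$ with $x\dashv_B y$. A normed plane is rectilinear if its unit circle is a parallelogram. *)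

(* classical reals. A normed plane is modelled as R^2 = R*R
   equipped with an arbitrary norm N (every 2-dimensional real normed space
   is linearly isometric to such a plane). *)
From Stdlib Require Import Reals.
Open Scope R_scope.

Definition vec := (R * R)%type.
Definition vadd (u v : vec) : vec := (fst u + fst v, snd u + snd v).
Definition vscale (s : R) (v : vec) : vec := (s * fst v, s * snd v).
Definition vzero : vec := (0, 0).

Definition is_norm (N : vec -> R) : Prop :=
  (forall v, N v = 0 <-> v = vzero) /\
  (forall s v, N (vscale s v) = Rabs s * N v) /\
  (forall u v, N (vadd u v) <= N u + N v).

Definition unit_circle (N : vec -> R) (v : vec) : Prop := N v = 1.

Definition birkhoff (N : vec -> R) (x y : vec) : Prop :=
  x <> vzero /\ y <> vzero /\
  forall t : R, N (vadd x (vscale t y)) >= N x.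

(* T_xy(S): image of the unit circle under the linear map T_xy with
   T_xy x = x, T_xy y = -y (x, y linearly independent), i.e.
   T_xy (a x + b y) = a x - b y. *)
Definition T_image_S (N : vec -> R) (x y : vec) (z : vec) : Prop :=
  exists a b : R, unit_circle N (vadd (vscale a x) (vscale b y)) /\
                  z = vadd (vscale a x) (vscale (- b) y).

Definition is_lower_bound (E : R -> Prop) (m : R) : Prop :=
  forall x, E x -> m <= x.
Definition is_glb (E : R -> Prop) (m : R) : Prop :=
  is_lower_bound E m /\ (forall b, is_lower_bound E b -> b <= m).

Definition T_norms (N : vec -> R) (x y : vec) (r : R) : Prop :=
  exists z, T_image_S N x y z /\ r = N z.

Definition cS_values (N : vec -> R) (d : R) : Prop :=
  exists x y : vec, birkhoff N x y /\
    exists M m : R, is_lub (T_norms N x y) M /\ is_glb (T_norms N x y) m /\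
                    d = M - m.

Definition is_cS (N : vec -> R) (c : R) : Prop := is_lub (cS_values N) c.

Definition from_inner_product (N : vec -> R) : Prop :=
  exists ip : vec -> vec -> R,
    (forall u v, ip u v = ip v u) /\
    (forall u v w, ip (vadd u v) w = ip u w + ip v w) /\
    (forall s u v, ip (vscale s u) v = s * ip u v) /\
    (forall v, v <> vzero -> 0 < ip v v) /\
    (forall v, N v = sqrt (ip v v)).

Definition segment (p q z : vec) : Prop :=
  exists t : R, 0 <= t <= 1 /\ z = vadd (vscale (1 - t) p) (vscale t q).

(* rectilinear: the unit circle is (the boundary of) a parallelogram with
   vertices a b c d (in order), non-degenerate *)
Definition rectilinear (N : vec -> R) : Prop :=
  exists a b c d : vec,
    vadd a c = vadd b d /\
    (fst b - fst a) * (snd d - snd a) - (snd b - snd a) * (fst d - fst a) <> 0 /\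
    forall z, unit_circle N z <->
      (segment a b z \/ segment b c z \/ segment c d z \/ segment d a z).

(* Each T_xy(S) contains 1, is closed under r |-> 1/r (T_xy is an involution) and
   consists of numbers at most 3, since N(a x - b y) <= 2 |a| N(x) + 1 <= 3; hence
   every value sup - inf lies in [0, 3 - 1/3].  All values vanish iff every T_xy is
   an isometry; then the unit circle is strictly convex, Birkhoff orthogonality is
   unique on the right and isosceles orthogonality implies it, which forces the
   Euclidean form of a Birkhoff-orthonormal basis to be constant on the circle.
   The max norm attains 8/3, and values approaching 8/3 yield, by compactness of the
   circle, unit vectors p, q with N(p + q) = N(p - q) = 2; then the circle is the
   parallelogram with vertices +-p, +-q. *)

From Stdlib Require Import Reals Lra Psatz Classical ZArith.
Open Scope R_scope.

Definition vsub (u v : vec) : vec := vadd u (vscale (-1) v).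
Definition lincomb (x y : vec) (a b : R) : vec := vadd (vscale a x) (vscale b y).
Definition det (x y : vec) : R := fst x * snd y - snd x * fst y.

Lemma pair_eq (a b c d : R) : a = c -> b = d -> (a, b) = (c, d).
Proof. intros -> ->; reflexivity. Qed.

Ltac vsimpl := unfold vadd, vscale, vzero in *; simpl in *.
Ltac vec_eq := repeat match goal with v : vec |- _ => destruct v end;
  unfold lincomb, vsub, det in *; vsimpl; apply pair_eq; [ring || (field; repeat split; try lra) ..].
Ltac destruct_Rabs := unfold Rabs in *; repeat match goal with
  | |- context [Rcase_abs ?a] => destruct (Rcase_abs a)
  | H : context [Rcase_abs ?a] |- _ => destruct (Rcase_abs a)
  end.
Ltac destruct_Rmax := unfold Rmax in *; repeat match goal with
  | |- context [Rle_dec ?a ?b] => destruct (Rle_dec a b)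
  | H : context [Rle_dec ?a ?b] |- _ => destruct (Rle_dec a b)
  end.

Lemma Rabs_le_inv a b : Rabs a <= b -> - b <= a <= b.
Proof. destruct_Rabs; lra. Qed.

Lemma lipschitz_continuous (f : R -> R) (L : R) :
  (forall s t, Rabs (f s - f t) <= L * Rabs (s - t)) -> forall x, continuity_pt f x.
Proof.
  intros Hf x eps Heps.
  assert (HL : 0 < Rabs L + 1) by (pose proof (Rabs_pos L); lra).
  exists (eps / (Rabs L + 1)). split; [apply Rdiv_lt_0_compat; lra|].
  intros y [_ Hy]. simpl in *. unfold R_dist in *.
  apply Rle_lt_trans with ((Rabs L + 1) * Rabs (y - x)).
  - eapply Rle_trans; [apply Hf|].
    apply Rmult_le_compat_r; [apply Rabs_pos|]. pose proof (Rle_abs L); lra.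
  - replace eps with ((Rabs L + 1) * (eps / (Rabs L + 1))) by (field; lra).
    apply Rmult_lt_compat_l; lra.
Qed.

Lemma continuous_coercive_min (phi : R -> R) (K : R) : 0 <= K ->
  (forall t, continuity_pt phi t) -> (forall t, K < Rabs t -> phi 0 <= phi t) ->
  exists t0, forall t, phi t0 <= phi t.
Proof.
  intros HK Hc Hout.
  destruct (continuity_ab_min phi (- K) K) as [t0 [Hmin _]]; [lra|auto|].
  exists t0. intros t. destruct (Rle_dec (Rabs t) K) as [Ht|Ht].
  - apply Hmin, Rabs_le_inv, Ht.
  - apply Rle_trans with (phi 0); [apply Hmin; lra|apply Hout; lra].
Qed.

Lemma lipschitz2_attains_max (G : R -> R -> R) (L a b : R) : a <= b -> 0 <= L ->
  (forall s s' t t', Rabs (G s t - G s' t') <= L * Rabs (s - s') + L * Rabs (t - t')) ->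
  exists s0 t0, a <= s0 <= b /\ a <= t0 <= b /\
    forall s t, a <= s <= b -> a <= t <= b -> G s t <= G s0 t0.
Proof.
  intros Hab HL HG.
  assert (HGt : forall s t t', Rabs (G s t - G s t') <= L * Rabs (t - t')).
  { intros s t t'. pose proof (HG s s t t') as H.
    rewrite Rminus_diag, Rabs_R0, Rmult_0_r, Rplus_0_l in H. exact H. }
  set (E := fun s g => exists t, a <= t <= b /\ g = G s t).
  assert (Hbound : forall s, bound (E s)).
  { intros s. exists (G s a + L * (b - a)). intros g [t [Ht ->]].
    pose proof (HGt s t a) as H. apply Rabs_le_inv in H.
    rewrite (Rabs_right (t - a)) in H by lra. nra. }
  assert (Hne : forall s, exists g, E s g) by (intros s; exists (G s a), a; split; [lra|reflexivity]).
  set (F := fun s => proj1_sig (completeness (E s) (Hbound s) (Hne s))).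
  assert (HF : forall s, is_lub (E s) (F s)) by (intros s; unfold F; destruct completeness; auto).
  assert (HFle : forall s s', F s <= F s' + L * Rabs (s - s')).
  { intros s s'. apply (proj2 (HF s)). intros g [t [Ht ->]].
    assert (G s' t <= F s') by (apply (proj1 (HF s')); exists t; auto).
    pose proof (HG s s' t t) as Hst. rewrite Rminus_diag, Rabs_R0, Rmult_0_r, Rplus_0_r in Hst.
    apply Rabs_le_inv in Hst. lra. }
  destruct (continuity_ab_maj F a b Hab) as [s0 [Hs0 Hs0r]].
  { intros c _. apply (lipschitz_continuous F L). intros s s'. apply Rabs_le.
    pose proof (HFle s s'). pose proof (HFle s' s). rewrite Rabs_minus_sym in H0. lra. }
  destruct (continuity_ab_maj (G s0) a b Hab) as [t0 [Ht0 Ht0r]].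
  { intros c _. apply (lipschitz_continuous (G s0) L), HGt. }
  exists s0, t0. split; [auto|split; [auto|]]. intros s t Hs Ht.
  apply Rle_trans with (F s); [apply (proj1 (HF s)); exists t; auto|].
  apply Rle_trans with (F s0); [apply Hs0, Hs|].
  apply (proj2 (HF s0)). intros g [t' [Ht' ->]]. apply Ht0, Ht'.
Qed.

Lemma le0_of_nat_mul_bounded a b : (forall k : nat, INR k * a <= b) -> a <= 0.
Proof.
  intros H. apply Rnot_lt_le. intro Ha.
  assert (Hb : 0 <= b) by (specialize (H 0%nat); simpl in H; lra).
  destruct (archimed (b / a)) as [Hup _].
  assert (Hk : INR (Z.to_nat (up (b / a))) = IZR (up (b / a))).
  { rewrite INR_IZR_INZ, Z2Nat.id; auto.
    apply le_IZR. assert (0 <= b / a) by (apply Rle_mult_inv_pos; lra). lra. }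
  specialize (H (Z.to_nat (up (b / a)))). rewrite Hk in H.
  assert (b / a * a < IZR (up (b / a)) * a) by (apply Rmult_lt_compat_r; lra).
  replace (b / a * a) with b in * by (field; lra). lra.
Qed.

Lemma cramer x y z : det x y <> 0 ->
  z = lincomb x y (det z y / det x y) (det x z / det x y).
Proof. intros D. vec_eq. Qed.

Lemma lincomb_inj u v a b a' b' :
  det u v <> 0 -> lincomb u v a b = lincomb u v a' b' -> a = a' /\ b = b'.
Proof.
  intros D E.
  assert (Ea : forall a b, det (lincomb u v a b) v = a * det u v)
    by (intros; unfold det, lincomb; vsimpl; ring).
  assert (Eb : forall a b, det u (lincomb u v a b) = b * det u v)
    by (intros; unfold det, lincomb; vsimpl; ring).
  split; apply (Rmult_eq_reg_r (det u v)); auto.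
  - rewrite <- (Ea a b), <- (Ea a' b'), E. reflexivity.
  - rewrite <- (Eb a b), <- (Eb a' b'), E. reflexivity.
Qed.

Lemma vscale_neq0 s v : s <> 0 -> v <> vzero -> vscale s v <> vzero.
Proof.
  intros Hs Hv E. apply Hv. destruct v as [v1 v2]. unfold vscale, vzero in *; simpl in E.
  injection E as E1 E2. apply pair_eq.
  - destruct (Rmult_integral _ _ E1); tauto.
  - destruct (Rmult_integral _ _ E2); tauto.
Qed.

Section NormedPlane.
Context {N : vec -> R} (HN : is_norm N).

Lemma norm0 : N vzero = 0.
Proof. apply (proj1 HN). reflexivity. Qed.

Lemma normZ s v : N (vscale s v) = Rabs s * N v.
Proof. apply (proj1 (proj2 HN)). Qed.

Lemma norm_triangle u v : N (vadd u v) <= N u + N v.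
Proof. apply (proj2 (proj2 HN)). Qed.

Lemma norm_eq0 v : N v = 0 -> v = vzero.
Proof. apply (proj1 HN). Qed.

Lemma normN v : N (vscale (-1) v) = N v.
Proof. rewrite normZ. destruct_Rabs; lra. Qed.

Lemma norm_ge0 v : 0 <= N v.
Proof.
  assert (H := norm_triangle v (vscale (-1) v)).
  replace (vadd v (vscale (-1) v)) with vzero in H by vec_eq.
  rewrite norm0, normN in H. lra.
Qed.

Lemma norm_gt0 v : v <> vzero -> 0 < N v.
Proof.
  intros Hv. destruct (norm_ge0 v) as [H|H]; auto.
  exfalso; apply Hv, norm_eq0; auto.
Qed.

Lemma unit_neq0 v : N v = 1 -> v <> vzero.
Proof. intros Hv ->. rewrite norm0 in Hv. lra. Qed.

Lemma norm_normalize v : v <> vzero -> N (vscale (/ N v) v) = 1.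
Proof.
  intros Hv. pose proof (norm_gt0 v Hv).
  rewrite normZ, Rabs_right by (left; apply Rinv_0_lt_compat; lra). field; lra.
Qed.

Lemma norm_dist_ge u v : Rabs (N u - N v) <= N (vsub u v).
Proof.
  assert (H1 := norm_triangle (vsub u v) v).
  assert (H2 := norm_triangle (vscale (-1) (vsub u v)) u).
  replace (vadd (vsub u v) v) with u in H1 by vec_eq.
  replace (vadd (vscale (-1) (vsub u v)) u) with v in H2 by vec_eq.
  rewrite normN in H2. apply Rabs_le; lra.
Qed.

Lemma norm_coord_le a b : N (a, b) <= Rabs a * N (1, 0) + Rabs b * N (0, 1).
Proof.
  replace (a, b) with (vadd (vscale a (1, 0)) (vscale b (0, 1))) by vec_eq.
  rewrite <- !normZ. apply norm_triangle.
Qed.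

(** * Birkhoff orthogonality and the sets T_xy(S) *)

Lemma birkhoff_norm_ge x y a b : birkhoff N x y -> Rabs a * N x <= N (lincomb x y a b).
Proof.
  intros [_ [_ Hb]]. destruct (Req_dec a 0) as [->|Ha].
  - rewrite Rabs_R0, Rmult_0_l. apply norm_ge0.
  - replace (lincomb x y a b) with (vscale a (vadd x (vscale (b / a) y))) by vec_eq.
    rewrite normZ. apply Rmult_le_compat_l; [apply Rabs_pos|]. apply Rge_le, Hb.
Qed.

Lemma birkhoff_lincomb_eq0 x y a b :
  birkhoff N x y -> lincomb x y a b = vzero -> a = 0 /\ b = 0.
Proof.
  intros Hb E. pose proof Hb as [Hx [Hy _]].
  assert (Ha : a = 0).
  { pose proof (birkhoff_norm_ge x y a b Hb) as H. rewrite E, norm0 in H.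
    pose proof (norm_gt0 x Hx). pose proof (Rabs_pos a).
    destruct (Req_dec a 0); auto. pose proof (Rabs_pos_lt a H2). nra. }
  subst a. split; auto.
  replace (lincomb x y 0 b) with (vscale b y) in E by vec_eq.
  apply (f_equal N) in E. rewrite normZ, norm0 in E. pose proof (norm_gt0 y Hy).
  destruct (Req_dec b 0); auto. pose proof (Rabs_pos_lt b H0). nra.
Qed.

Lemma birkhoff_det_neq0 x y : birkhoff N x y -> det x y <> 0.
Proof.
  intros Hb D. pose proof Hb as [Hx _]. apply Hx.
  destruct x as [x1 x2], y as [y1 y2]; unfold det in D; simpl in D.
  destruct (birkhoff_lincomb_eq0 _ _ y2 (- x2) Hb) as [Hy2 Hx2];
    [unfold lincomb; vsimpl; apply pair_eq; nra|].
  destruct (birkhoff_lincomb_eq0 _ _ y1 (- x1) Hb) as [Hy1 Hx1];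
    [unfold lincomb; vsimpl; apply pair_eq; nra|].
  apply pair_eq; lra.
Qed.

Lemma birkhoff_scale x y l m :
  birkhoff N x y -> l <> 0 -> m <> 0 -> birkhoff N (vscale l x) (vscale m y).
Proof.
  intros Hb Hl Hm. pose proof Hb as [Hx [Hy _]].
  split; [apply vscale_neq0; auto|split; [apply vscale_neq0; auto|]].
  intros t. rewrite normZ.
  replace (vadd (vscale l x) (vscale t (vscale m y))) with (lincomb x y l (t * m)) by vec_eq.
  apply Rle_ge, birkhoff_norm_ge; auto.
Qed.

Lemma birkhoff_exists y : y <> vzero -> exists x, birkhoff N x y.
Proof.
  intros Hy. destruct y as [y1 y2].
  set (v := (- y2, y1)).
  set (phi := fun t => N (vadd v (vscale t (y1, y2)))).
  pose proof (norm_gt0 _ Hy) as Hny.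
  assert (Hlip : forall s t, Rabs (phi s - phi t) <= N (y1, y2) * Rabs (s - t)).
  { intros s t. eapply Rle_trans; [apply norm_dist_ge|].
    replace (vsub _ _) with (vscale (s - t) (y1, y2)) by (unfold v; vec_eq).
    rewrite normZ. lra. }
  assert (Hcoerc : forall t, 2 * N v / N (y1, y2) < Rabs t -> phi 0 <= phi t).
  { intros t Ht. unfold phi.
    replace (vadd v (vscale 0 (y1, y2))) with v by (unfold v; vec_eq).
    assert (H := norm_triangle (vadd v (vscale t (y1, y2))) (vscale (-1) v)).
    replace (vadd (vadd v _) _) with (vscale t (y1, y2)) in H by (unfold v; vec_eq).
    rewrite normZ, normN in H.
    assert (2 * N v < Rabs t * N (y1, y2)).
    { apply (Rmult_lt_compat_r (N (y1, y2))) in Ht; auto.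
      replace (2 * N v / N (y1, y2) * N (y1, y2)) with (2 * N v) in Ht by (field; lra). lra. }
    lra. }
  destruct (continuous_coercive_min phi (2 * N v / N (y1, y2))) as [t0 Ht0].
  - pose proof (norm_ge0 v). apply Rle_mult_inv_pos; lra.
  - apply (lipschitz_continuous _ _ Hlip).
  - exact Hcoerc.
  - exists (vadd v (vscale t0 (y1, y2))). split; [|split; auto].
    + intro E. apply Hy. unfold v in E; vsimpl. injection E as E1 E2.
      apply pair_eq; nra.
    + intros s. apply Rle_ge.
      replace (vadd (vadd v _) _) with (vadd v (vscale (t0 + s) (y1, y2))) by (unfold v; vec_eq).
      apply Ht0.
Qed.

Lemma T_norms_iff x y r : T_norms N x y r <->
  exists a b, N (lincomb x y a b) = 1 /\ r = N (lincomb x y a (- b)).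
Proof.
  split.
  - intros [z [[a [b [H1 ->]]] ->]]. exists a, b. auto.
  - intros [a [b [H1 ->]]]. exists (lincomb x y a (- b)). split; auto. exists a, b. auto.
Qed.

Lemma T_norms_1 x y : birkhoff N x y -> T_norms N x y 1.
Proof.
  intros [Hx _]. apply T_norms_iff. exists (/ N x), 0.
  replace (lincomb x y (/ N x) (- 0)) with (vscale (/ N x) x) by vec_eq.
  replace (lincomb x y (/ N x) 0) with (vscale (/ N x) x) by vec_eq.
  rewrite norm_normalize; auto.
Qed.

Lemma T_norms_le3 x y r : birkhoff N x y -> T_norms N x y r -> r <= 3.
Proof.
  intros Hb Hr. apply T_norms_iff in Hr as [a [b [H1 ->]]].
  replace (lincomb x y a (- b)) with (vadd (vscale (2 * a) x) (vscale (-1) (lincomb x y a b)))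
    by vec_eq.
  eapply Rle_trans; [apply norm_triangle|].
  rewrite normN, normZ, H1, Rabs_mult, (Rabs_right 2) by lra.
  pose proof (birkhoff_norm_ge x y a b Hb). lra.
Qed.

(* T_xy is an involution: rescaling T_xy(v), of norm r, back onto the circle
   exhibits 1 / r as a norm in T_xy(S). *)
Lemma T_norms_inv x y r : birkhoff N x y -> T_norms N x y r ->
  0 < r /\ T_norms N x y (/ r).
Proof.
  intros Hb Hr. apply T_norms_iff in Hr as [a [b [H1 H2]]].
  assert (Hpos : 0 < r).
  { subst r. apply norm_gt0. intro E.
    destruct (birkhoff_lincomb_eq0 x y a (- b) Hb E) as [-> Eb].
    replace b with 0 in H1 by lra.
    replace (lincomb x y 0 0) with vzero in H1 by vec_eq. rewrite norm0 in H1. lra. }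
  split; auto. apply T_norms_iff. exists (a / r), (- b / r).
  replace (lincomb x y (a / r) (- b / r)) with (vscale (/ r) (lincomb x y a (- b))) by vec_eq.
  replace (lincomb x y (a / r) (- (- b / r))) with (vscale (/ r) (lincomb x y a b)) by vec_eq.
  rewrite !normZ, <- H2, H1, Rabs_right by (left; apply Rinv_0_lt_compat; lra).
  split; field; lra.
Qed.

Lemma T_norms_lub_exists x y : birkhoff N x y -> exists M, is_lub (T_norms N x y) M.
Proof.
  intros Hb. destruct (completeness (T_norms N x y)) as [M HM].
  - exists 3. intros r. apply T_norms_le3, Hb.
  - exists 1. apply T_norms_1, Hb.
  - exists M; auto.
Qed.

Lemma T_norms_glb_exists x y : birkhoff N x y -> exists m, is_glb (T_norms N x y) m.
Proof.
  intros Hb. destruct (completeness (fun r => T_norms N x y (- r))) as [L [HL1 HL2]].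
  - exists 0. intros r Hr. destruct (T_norms_inv x y _ Hb Hr). lra.
  - exists (-1). replace (- -1) with 1 by ring. apply T_norms_1, Hb.
  - exists (- L). split.
    + intros r Hr. assert (- r <= L) by (apply HL1; rewrite Ropp_involutive; auto). lra.
    + intros b Hbd. assert (L <= - b) by (apply HL2; intros r Hr; specialize (Hbd _ Hr); lra).
      lra.
Qed.

Lemma T_norms_lub_glb_bounds x y M m : birkhoff N x y ->
  is_lub (T_norms N x y) M -> is_glb (T_norms N x y) m ->
  1 <= M <= 3 /\ / M <= m <= 1 /\ 0 <= M - m <= 8 / 3.
Proof.
  intros Hb [HM1 HM2] [Hm1 Hm2].
  assert (H1 : 1 <= M) by (apply HM1, T_norms_1, Hb).
  assert (H3 : M <= 3) by (apply HM2; intros r; apply T_norms_le3, Hb).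
  assert (Hm : m <= 1) by (apply Hm1, T_norms_1, Hb).
  assert (Hinv : / M <= m).
  { apply Hm2. intros r Hr. destruct (T_norms_inv x y r Hb Hr) as [Hp Hi].
    rewrite <- (Rinv_inv r). apply Rinv_le_contravar, HM1, Hi.
    apply Rinv_0_lt_compat, Hp. }
  assert (M - / M <= 8 / 3).
  { assert (/ M * M = 1) by (field; lra). nra. }
  lra.
Qed.

Lemma cS_values_bounds d : cS_values N d -> 0 <= d <= 8 / 3.
Proof.
  intros [x [y [Hb [M [m [HM [Hm ->]]]]]]].
  apply (T_norms_lub_glb_bounds x y M m Hb HM Hm).
Qed.

Lemma cS_values_inhabited : exists d, cS_values N d.
Proof.
  destruct (birkhoff_exists (0, 1)) as [x Hb]; [intro E; injection E; lra|].
  destruct (T_norms_lub_exists _ _ Hb) as [M HM].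
  destruct (T_norms_glb_exists _ _ Hb) as [m Hm].
  exists (M - m), x, (0, 1). split; auto. exists M, m. auto.
Qed.

(** * Inner product norms *)

Lemma inner_product_lincomb (ip : vec -> vec -> R) :
  (forall u v, ip u v = ip v u) ->
  (forall u v w, ip (vadd u v) w = ip u w + ip v w) ->
  (forall s u v, ip (vscale s u) v = s * ip u v) ->
  forall x y a b, ip (lincomb x y a b) (lincomb x y a b) =
    a * a * ip x x + 2 * a * b * ip x y + b * b * ip y y.
Proof.
  intros Hs Ha Hsc x y a b. unfold lincomb.
  rewrite Ha, !Hsc, (Hs x), (Hs y), !Ha, !Hsc, (Hs y x). ring.
Qed.

Lemma T_norms_eq1_of_inner_product x y r :
  from_inner_product N -> birkhoff N x y -> T_norms N x y r -> r = 1.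
Proof.
  intros [ip [Hs [Ha [Hsc [Hp Hn]]]]] Hb Hr.
  pose proof (inner_product_lincomb ip Hs Ha Hsc) as Q.
  assert (Hnn : forall v, 0 <= ip v v).
  { intros v. destruct (classic (v = vzero)) as [->|Hv]; [|left; auto].
    replace vzero with (vscale 0 vzero) by vec_eq. rewrite Hsc. lra. }
  pose proof Hb as [_ [Hy Hbk]].
  assert (Hyy : 0 < ip y y) by auto.
  assert (Hxy : ip x y = 0).
  { set (t := - ip x y / ip y y).
    specialize (Hbk t). rewrite !Hn in Hbk.
    replace (vadd x (vscale t y)) with (lincomb x y 1 t) in Hbk by vec_eq.
    apply Rge_le, sqrt_le_0 in Hbk; [|apply Hnn|apply Hnn].
    rewrite Q in Hbk.
    replace (1 * 1 * ip x x + 2 * 1 * t * ip x y + t * t * ip y y)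
      with (ip x x - ip x y * ip x y / ip y y) in Hbk by (unfold t; field; lra).
    assert (ip x y * ip x y / ip y y * ip y y = ip x y * ip x y) by (field; lra).
    assert (0 <= ip x y * ip x y / ip y y) by (apply Rle_mult_inv_pos; nra).
    nra. }
  apply T_norms_iff in Hr as [a [b [H1 ->]]].
  rewrite <- H1, !Hn, !Q, Hxy. f_equal. ring.
Qed.

Lemma cS_values_eq0_of_inner_product d : from_inner_product N -> cS_values N d -> d = 0.
Proof.
  intros Hip [x [y [Hb [M [m [[HM1 HM2] [[Hm1 Hm2] ->]]]]]]].
  pose proof (fun r => T_norms_eq1_of_inner_product x y r Hip Hb) as Hall.
  assert (M <= 1) by (apply HM2; intros r Hr; rewrite (Hall r Hr); lra).
  assert (1 <= m) by (apply Hm2; intros r Hr; rewrite (Hall r Hr); lra).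
  assert (1 <= M) by (apply HM1, T_norms_1, Hb).
  assert (m <= 1) by (apply Hm1, T_norms_1, Hb).
  lra.
Qed.

End NormedPlane.

(** * A Lipschitz parametrization of the unit circle *)

(* The unit circle is reached through a Lipschitz path on [-1, 3]: [square_path]
   runs along the boundary of the square [-1,1]^2 from (1,-1) to (-1,1), and
   [circle_path] projects it radially; its image and its negative cover the circle. *)
Definition clamp (s : R) : R := Rmax (-1) (Rmin s 3).
Definition square_path (s : R) : vec :=
  let c := clamp s in if Rle_dec c 1 then (1, c) else (2 - c, 1).
Definition circle_path (N : vec -> R) (s : R) : vec :=
  vscale (/ N (square_path s)) (square_path s).

Lemma clamp_id s : -1 <= s <= 3 -> clamp s = s.
Proof. intros. unfold clamp, Rmin. destruct_Rmax; repeat destruct Rle_dec; lra. Qed.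

Lemma square_path_neq0 s : square_path s <> vzero.
Proof. unfold square_path, vzero. destruct Rle_dec; intro E; injection E; lra. Qed.

Section CirclePath.
Context {N : vec -> R} (HN : is_norm N).

Lemma square_path_lipschitz s t :
  N (vsub (square_path s) (square_path t)) <= (N (1, 0) + N (0, 1)) * Rabs (s - t).
Proof.
  assert (Hc : Rabs (clamp s - clamp t) <= Rabs (s - t)).
  { unfold clamp, Rmin. destruct_Rmax; repeat destruct Rle_dec; destruct_Rabs; lra. }
  pose proof (norm_ge0 HN (1, 0)). pose proof (norm_ge0 HN (0, 1)).
  unfold square_path, vsub. set (c := clamp s) in *. set (d := clamp t) in *.
  destruct (Rle_dec c 1); destruct (Rle_dec d 1); vsimpl;
  eapply Rle_trans; try apply (norm_coord_le HN);
  match goal with |- ?a * ?x + ?b * ?y <= _ =>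
    assert (a <= Rabs (s - t)) by (destruct_Rabs; lra);
    assert (b <= Rabs (s - t)) by (destruct_Rabs; lra) end;
  nra.
Qed.

Lemma square_path_norm_lipschitz s t :
  Rabs (N (square_path s) - N (square_path t)) <= (N (1, 0) + N (0, 1)) * Rabs (s - t).
Proof. eapply Rle_trans; [apply (norm_dist_ge HN)|apply square_path_lipschitz]. Qed.

Lemma square_path_norm_bounded_below : exists k, 0 < k /\ forall s, k <= N (square_path s).
Proof.
  destruct (continuity_ab_min (fun s => N (square_path s)) (-1) 3) as [m [Hm _]].
  - lra.
  - intros c _. apply (lipschitz_continuous _ _ square_path_norm_lipschitz).
  - exists (N (square_path m)). split; [apply (norm_gt0 HN), square_path_neq0|].
    intros s. assert (Hs : -1 <= clamp s <= 3).
    { unfold clamp, Rmin. destruct_Rmax; repeat destruct Rle_dec; lra. }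
    unfold square_path at 2. rewrite <- (clamp_id (clamp s) Hs).
    apply (Hm (clamp s) Hs).
Qed.

Lemma circle_path_unit s : N (circle_path N s) = 1.
Proof. apply (norm_normalize HN), square_path_neq0. Qed.

Lemma circle_path_lipschitz : exists L, 0 <= L /\
  forall s t, N (vsub (circle_path N s) (circle_path N t)) <= L * Rabs (s - t).
Proof.
  destruct square_path_norm_bounded_below as [k [Hk Hke]].
  set (K := N (1, 0) + N (0, 1)).
  assert (HK : 0 <= K) by (pose proof (norm_ge0 HN (1, 0)); pose proof (norm_ge0 HN (0, 1)); unfold K; lra).
  exists (2 * K / k). split; [apply Rle_mult_inv_pos; lra|].
  intros s t. unfold circle_path.
  set (a := N (square_path s)). set (b := N (square_path t)).
  assert (Ha : k <= a) by apply Hke. assert (Hb : k <= b) by apply Hke.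
  replace (vsub (vscale (/ a) (square_path s)) (vscale (/ b) (square_path t))) with
    (vadd (vscale (/ a) (vsub (square_path s) (square_path t)))
          (vscale ((b - a) / (a * b)) (square_path t))) by vec_eq.
  eapply Rle_trans; [apply (norm_triangle HN)|]. rewrite !(normZ HN). fold b.
  pose proof (square_path_lipschitz s t) as H1. fold K in H1.
  pose proof (square_path_norm_lipschitz t s) as H2. fold K a b in H2.
  rewrite (Rabs_minus_sym t s) in H2.
  set (D := N (vsub (square_path s) (square_path t))) in *.
  set (r := Rabs (s - t)) in *.
  assert (0 <= r) by apply Rabs_pos.
  assert (0 <= D) by apply (norm_ge0 HN).
  rewrite (Rabs_right (/ a)) by (left; apply Rinv_0_lt_compat; lra).
  unfold Rdiv. rewrite Rabs_mult, (Rabs_right (/ (a * b))) by (left; apply Rinv_0_lt_compat; nra).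
  replace (Rabs (b - a) * / (a * b) * b) with (Rabs (b - a) / a) by (field; lra).
  assert (E1 : D / a <= K * r / k).
  { apply Rle_trans with (D / k); unfold Rdiv.
    - apply Rmult_le_compat_l; [lra|]. apply Rinv_le_contravar; lra.
    - apply Rmult_le_compat_r; [left; apply Rinv_0_lt_compat|]; lra. }
  assert (E2 : Rabs (b - a) / a <= K * r / k).
  { apply Rle_trans with (Rabs (b - a) / k); unfold Rdiv.
    - apply Rmult_le_compat_l; [apply Rabs_pos|]. apply Rinv_le_contravar; lra.
    - apply Rmult_le_compat_r; [left; apply Rinv_0_lt_compat|]; lra. }
  unfold Rdiv in E1, E2. rewrite Rmult_comm in E1.
  replace (2 * K * / k * r) with (K * r * / k + K * r * / k) by (field; lra). lra.
Qed.

Lemma circle_path_cover z : N z = 1 ->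
  exists s, -1 <= s <= 3 /\ (z = circle_path N s \/ z = vscale (-1) (circle_path N s)).
Proof.
  intros Hz. pose proof (unit_neq0 HN z Hz) as Hnz. destruct z as [z1 z2].
  assert (key : forall s l, -1 <= s <= 3 -> l <> 0 -> square_path s = vscale l (z1, z2) ->
    exists s, -1 <= s <= 3 /\ ((z1, z2) = circle_path N s \/ (z1, z2) = vscale (-1) (circle_path N s))).
  { intros s l Hs Hl E. exists s. split; auto.
    unfold circle_path. rewrite E, (normZ HN), Hz, Rmult_1_r.
    destruct (Rle_dec 0 l).
    - left. rewrite Rabs_right by lra. vec_eq.
    - right. rewrite Rabs_left by lra. vec_eq. }
  destruct (Rle_dec (Rabs z2) (Rabs z1)) as [Hle|Hlt].
  - assert (Hz1 : z1 <> 0).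
    { intros ->. apply Hnz. rewrite Rabs_R0 in Hle. pose proof (Rabs_pos z2).
      replace z2 with 0 by (destruct_Rabs; lra). reflexivity. }
    assert (-1 <= z2 / z1 <= 1).
    { apply Rabs_le_inv. unfold Rdiv. rewrite Rabs_mult, Rabs_inv.
      pose proof (Rabs_pos_lt z1 Hz1).
      apply (Rmult_le_reg_r (Rabs z1)); auto. rewrite Rmult_assoc, Rinv_l; lra. }
    apply (key (z2 / z1) (/ z1)); [lra|apply Rinv_neq_0_compat; auto|].
    unfold square_path. rewrite clamp_id by lra. destruct Rle_dec; [vec_eq|lra].
  - assert (Hz2 : z2 <> 0) by (intros ->; rewrite Rabs_R0 in Hlt; pose proof (Rabs_pos z1); lra).
    assert (Hr : Rabs (z1 / z2) < 1).
    { unfold Rdiv. rewrite Rabs_mult, Rabs_inv.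
      pose proof (Rabs_pos_lt z2 Hz2).
      apply (Rmult_lt_reg_r (Rabs z2)); auto. rewrite Rmult_assoc, Rinv_l; lra. }
    apply Rabs_def2 in Hr.
    apply (key (2 - z1 / z2) (/ z2)); [lra|apply Rinv_neq_0_compat; auto|].
    unfold square_path. rewrite clamp_id by lra. destruct Rle_dec; [lra|vec_eq].
Qed.

End CirclePath.

(** * Norms for which every T_xy is an isometry *)

(* [lincomb x y a (- b)] is T_xy applied to [lincomb x y a b]. *)
Definition reflections_isometric (N : vec -> R) : Prop :=
  forall x y a b, birkhoff N x y -> N (lincomb x y a (- b)) = N (lincomb x y a b).

Lemma reflections_isometric_of_cS_values_le0 {N} (HN : is_norm N) :
  (forall d, cS_values N d -> d <= 0) -> reflections_isometric N.
Proof.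
  intros Hd x y a b Hb.
  destruct (T_norms_lub_exists HN _ _ Hb) as [M HM].
  destruct (T_norms_glb_exists HN _ _ Hb) as [m Hm].
  assert (M - m <= 0) by (apply Hd; exists x, y; split; auto; exists M, m; auto).
  assert (Hall : forall r, T_norms N x y r -> r = 1).
  { intros r Hr. pose proof (proj1 HM r Hr). pose proof (proj1 Hm r Hr).
    pose proof (T_norms_lub_glb_bounds HN x y M m Hb HM Hm). lra. }
  set (s := N (lincomb x y a b)).
  destruct (Req_dec s 0) as [Hs|Hs].
  - apply (norm_eq0 HN) in Hs. destruct (birkhoff_lincomb_eq0 HN x y a b Hb Hs) as [-> ->].
    rewrite Ropp_0. reflexivity.
  - assert (Hsp : 0 < s) by (pose proof (norm_ge0 HN (lincomb x y a b)); unfold s in *; lra).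
    assert (Hr : T_norms N x y (N (lincomb x y (a / s) (- (b / s))))).
    { apply T_norms_iff. exists (a / s), (b / s). split; auto.
      replace (lincomb x y (a / s) (b / s)) with (vscale (/ s) (lincomb x y a b)) by vec_eq.
      rewrite (normZ HN), Rabs_right by (left; apply Rinv_0_lt_compat; lra).
      unfold s. field. fold s. lra. }
    apply Hall in Hr.
    replace (lincomb x y (a / s) (- (b / s))) with (vscale (/ s) (lincomb x y a (- b))) in Hr
      by vec_eq.
    rewrite (normZ HN), Rabs_right in Hr by (left; apply Rinv_0_lt_compat; lra).
    apply (Rmult_eq_reg_l (/ s)); [|apply Rinv_neq_0_compat; lra].
    rewrite Hr. fold s. field. lra.
Qed.

Section Reflections.
Context {N : vec -> R} (HN : is_norm N) (HI : reflections_isometric N).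

Lemma norm_eq0_of_invariant_translates u d :
  (forall k : nat, N (vsub d (vscale (INR k) u)) = N d) -> N u = 0.
Proof.
  intros H. apply Rle_antisym; [|apply (norm_ge0 HN)].
  apply (le0_of_nat_mul_bounded _ (2 * N d)). intros k.
  rewrite <- (Rabs_right (INR k)) by (apply Rle_ge, pos_INR).
  rewrite <- (normZ HN).
  replace (vscale (INR k) u) with (vadd d (vscale (-1) (vsub d (vscale (INR k) u)))) by vec_eq.
  eapply Rle_trans; [apply (norm_triangle HN)|]. rewrite (normN HN), H. lra.
Qed.

(* If the midpoint m of p <> q is a unit vector, then both m and p are Birkhoff
   orthogonal to d = q - p; composing T_pd and T_md translates m by multiples of d
   without changing its norm, which forces d = 0. *)
Lemma unit_midpoint_eq p q :
  N p = 1 -> N q = 1 -> N (vscale (1/2) (vadd p q)) = 1 -> p = q.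
Proof.
  intros Hp Hq Hm. apply NNPP. intro Hne.
  set (m := vscale (1/2) (vadd p q)) in *. set (d := vsub q p).
  assert (Hd : d <> vzero).
  { intro E. apply Hne. unfold d, vsub in E. destruct p, q; vsimpl.
    injection E; intros; apply pair_eq; lra. }
  assert (Hmd : forall s, 1 <= N (vadd m (vscale s d))).
  { intros s. destruct (Rle_dec 0 s).
    - assert (E : vscale (s + 1/2) m = vadd (vscale s p) (vscale (1/2) (vadd m (vscale s d))))
        by (unfold m, d; vec_eq).
      pose proof (norm_triangle HN (vscale s p) (vscale (1/2) (vadd m (vscale s d)))) as H.
      rewrite <- E, !(normZ HN), Hm, Hp, !Rabs_right in H by lra. lra.
    - assert (E : vscale (1/2 - s) m = vadd (vscale (- s) q) (vscale (1/2) (vadd m (vscale s d))))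
        by (unfold m, d; vec_eq).
      pose proof (norm_triangle HN (vscale (- s) q) (vscale (1/2) (vadd m (vscale s d)))) as H.
      rewrite <- E, !(normZ HN), Hm, Hq, !Rabs_right in H by lra. lra. }
  assert (Bm : birkhoff N m d).
  { split; [apply (unit_neq0 HN), Hm|split; auto]. intros t. rewrite Hm. apply Rle_ge, Hmd. }
  assert (Bp : birkhoff N p d).
  { split; [apply (unit_neq0 HN), Hp|split; auto]. intros t. rewrite Hp.
    replace (vadd p (vscale t d)) with (vadd m (vscale (t - 1/2) d)) by (unfold m, d; vec_eq).
    apply Rle_ge, Hmd. }
  apply Hd, (norm_eq0 HN), (norm_eq0_of_invariant_translates d m).
  induction k as [|k IHk].
  - f_equal. simpl. vec_eq.
  - rewrite <- IHk, S_INR.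
    transitivity (N (lincomb p d 1 (- (INR k + 1/2)))); [f_equal; unfold m, d; vec_eq|].
    rewrite HI by auto.
    transitivity (N (lincomb m d 1 (- - INR k))); [f_equal; unfold m, d; vec_eq|].
    rewrite HI by auto. f_equal. vec_eq.
Qed.

Lemma birkhoff_right_unique w t d : birkhoff N w t -> birkhoff N w d -> det t d = 0.
Proof.
  intros Bt Bd. apply NNPP. intro Hdet.
  pose proof (cramer w t d (birkhoff_det_neq0 HN _ _ Bt)) as Ed.
  set (a := det d t / det w t) in *. set (b := det w d / det w t) in *. clearbody a b.
  assert (Ha : a <> 0).
  { intros ->. apply Hdet. rewrite Ed. unfold lincomb, det; destruct w, t; vsimpl. ring. }
  assert (Hk : forall k : nat, N (vsub d (vscale (INR k) (vscale (2 * a) w))) = N d).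
  { induction k as [|k IHk].
    - f_equal. simpl. vec_eq.
    - rewrite <- IHk, S_INR.
      transitivity (N (lincomb w t (- a - 2 * INR k * a) (- - b))); [f_equal; rewrite Ed; vec_eq|].
      rewrite HI by auto.
      transitivity (N (lincomb w d (- 2 * INR k * a) (- (1)))); [f_equal; rewrite Ed; vec_eq|].
      rewrite HI by auto. f_equal. vec_eq. }
  apply norm_eq0_of_invariant_translates, (norm_eq0 HN) in Hk.
  exact (vscale_neq0 (2 * a) w ltac:(lra) (proj1 Bt) Hk).
Qed.

Lemma birkhoff_line_unit_unique x y a s t : birkhoff N x y -> 0 <= s -> 0 <= t ->
  N (lincomb x y a s) = 1 -> N (lincomb x y a t) = 1 -> s = t.
Proof.
  intros Bxy.
  assert (Hlt : forall lo hi, 0 <= lo < hi ->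
    N (lincomb x y a lo) = 1 -> N (lincomb x y a hi) = 1 -> False).
  { intros lo hi Hlh Hlo Hhi.
    assert (Hhi' : N (lincomb x y a (- hi)) = 1) by (rewrite HI; auto).
    assert (P0 : 1 <= N (lincomb x y a 0)).
    { pose proof (norm_triangle HN (vscale ((hi - lo) / hi) (lincomb x y a 0))
                                  (vscale (lo / hi) (lincomb x y a hi))) as H.
      replace (vadd _ _) with (lincomb x y a lo) in H by vec_eq.
      rewrite !(normZ HN), Hlo, Hhi, !Rabs_right in H
        by (apply Rle_ge, Rle_mult_inv_pos; lra).
      assert (lo / hi < 1) by (apply (Rmult_lt_reg_r hi); [|unfold Rdiv; rewrite Rmult_assoc, Rinv_l]; lra).
      assert ((hi - lo) / hi = 1 - lo / hi) by (field; lra).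
      nra. }
    assert (P1 : N (lincomb x y a 0) <= 1).
    { replace (lincomb x y a 0) with (vscale (1/2) (vadd (lincomb x y a hi) (lincomb x y a (- hi))))
        by vec_eq.
      pose proof (norm_triangle HN (lincomb x y a hi) (lincomb x y a (- hi))).
      rewrite (normZ HN), Rabs_right; lra. }
    assert (Heq : lincomb x y a hi = lincomb x y a (- hi)).
    { apply unit_midpoint_eq; auto.
      replace (vscale (1/2) _) with (lincomb x y a 0) by vec_eq. lra. }
    apply lincomb_inj in Heq; [lra|apply (birkhoff_det_neq0 HN), Bxy]. }
  intros Hs Ht Hus Hut. destruct (total_order_T s t) as [[H|H]|H]; auto.
  - exfalso. apply (Hlt s t); auto.
  - exfalso. apply (Hlt t s); auto.
Qed.

(* Writing p = a x + b y for a Birkhoff pair (x, y) with y = p - q, the unit vectors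
   p and q lie on the line a x + R y at parameters b and b - 1, which therefore have
   equal absolute value: b = 1/2 and p + q = 2 a x. *)
Lemma birkhoff_sum_diff p q :
  N p = 1 -> N q = 1 -> q <> p -> q <> vscale (-1) p -> birkhoff N (vadd p q) (vsub p q).
Proof.
  intros Hp Hq Hne1 Hne2.
  set (y := vsub p q).
  assert (Hy : y <> vzero).
  { intro E. apply Hne1. unfold y, vsub in E. destruct p, q; vsimpl.
    injection E; intros; apply pair_eq; lra. }
  destruct (birkhoff_exists HN y Hy) as [x Bx].
  pose proof (cramer x y p (birkhoff_det_neq0 HN _ _ Bx)) as Ep.
  set (a := det p y / det x y) in *. set (b := det x p / det x y) in *. clearbody a b.
  assert (Eq : q = lincomb x y a (b - 1)).
  { replace q with (vsub p y) by (unfold y; vec_eq). rewrite Ep. vec_eq. }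
  assert (Habs : forall t, N (lincomb x y a (Rabs t)) = N (lincomb x y a t)).
  { intros t. destruct_Rabs; auto. }
  assert (Hb : Rabs b = Rabs (b - 1)).
  { apply (birkhoff_line_unit_unique x y a); auto using Rabs_pos;
      rewrite Habs, <- ?Ep, <- ?Eq; auto. }
  assert (Hb2 : b = 1/2) by (revert Hb; destruct_Rabs; lra). subst b.
  assert (Ha : a <> 0) by (intros ->; apply Hne2; rewrite Eq, Ep; vec_eq).
  replace (vadd p q) with (vscale (2 * a) x) by (rewrite Eq, Ep; vec_eq).
  fold y. clearbody y. replace y with (vscale 1 y) by vec_eq.
  apply (birkhoff_scale HN); auto; lra.
Qed.

End Reflections.

Definition eucl_sq (v : vec) : R := fst v * fst v + snd v * snd v.

Lemma eucl_sq_scale s v : eucl_sq (vscale s v) = s * s * eucl_sq v.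
Proof. destruct v; unfold eucl_sq; vsimpl; ring. Qed.

Lemma eucl_sq_gt0 v : v <> vzero -> 0 < eucl_sq v.
Proof.
  intros H. destruct v as [a b]. unfold eucl_sq; simpl.
  destruct (Req_dec a 0) as [->|]; [destruct (Req_dec b 0) as [->|]|]; [now exfalso|nra|nra].
Qed.

Lemma birkhoff_orthogonal_of_eucl_sq_min {N} (HN : is_norm N) w :
  N w = 1 -> (forall z, N z = 1 -> eucl_sq w <= eucl_sq z) ->
  forall d, birkhoff N w d -> fst w * fst d + snd w * snd d = 0.
Proof.
  intros Hw Hmin d [_ [Hd Hb]]. apply NNPP. intro Hk.
  set (k := fst w * fst d + snd w * snd d) in *.
  pose proof (eucl_sq_gt0 d Hd) as Hq.
  set (p := vadd w (vscale (- k / eucl_sq d) d)).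
  assert (Hp : 1 <= N p) by (specialize (Hb (- k / eucl_sq d)); fold p in Hb; lra).
  assert (Hp0 : p <> vzero) by (intros E; rewrite E, (norm0 HN) in Hp; lra).
  specialize (Hmin _ (norm_normalize HN p Hp0)).
  rewrite eucl_sq_scale in Hmin.
  assert (HQp : eucl_sq p = eucl_sq w - k * k / eucl_sq d).
  { unfold p, k, eucl_sq in *. destruct w, d; vsimpl. field. lra. }
  assert (0 < / N p <= 1).
  { split; [apply Rinv_0_lt_compat; lra|]. rewrite <- Rinv_1. apply Rinv_le_contravar; lra. }
  assert (0 <= eucl_sq p) by (unfold eucl_sq; nra).
  assert (0 < k * k / eucl_sq d) by (apply Rdiv_lt_0_compat; nra).
  assert (/ N p * / N p * eucl_sq p <= eucl_sq p).
  { apply Rle_trans with (1 * eucl_sq p); [apply Rmult_le_compat_r; nra|lra]. }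
  lra.
Qed.

Lemma birkhoff_rotation_of_eucl_sq_max {N} (HN : is_norm N) w :
  N w = 1 -> (forall z, N z = 1 -> eucl_sq z <= eucl_sq w) ->
  birkhoff N w (snd w, - fst w).
Proof.
  intros Hw Hmax. pose proof (unit_neq0 HN w Hw) as Hw0.
  pose proof (eucl_sq_gt0 w Hw0) as HQ.
  split; [auto|split].
  - intro E. apply Hw0. destruct w as [a b]. simpl in E. injection E as E1 E2.
    apply pair_eq; lra.
  - intros t. rewrite Hw. apply Rnot_lt_ge. intro Hlt.
    set (p := vadd w (vscale t (snd w, - fst w))) in *.
    assert (HQp : eucl_sq p = eucl_sq w * (1 + t * t))
      by (unfold p, eucl_sq; destruct w; vsimpl; ring).
    assert (Hp0 : p <> vzero).
    { intros E. assert (eucl_sq p = 0) by (rewrite E; unfold eucl_sq; simpl; ring). nra. }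
    pose proof (norm_gt0 HN p Hp0).
    specialize (Hmax _ (norm_normalize HN p Hp0)). rewrite eucl_sq_scale in Hmax.
    assert (1 < / N p) by (rewrite <- Rinv_1; apply Rinv_lt_contravar; lra).
    assert (eucl_sq w <= eucl_sq p) by (rewrite HQp; nra).
    set (i := / N p) in *.
    assert (1 < i * i) by nra.
    assert (i * i * eucl_sq p > 1 * eucl_sq p) by (apply Rmult_gt_compat_r; lra).
    lra.
Qed.

Section EuclideanCoordinates.
Context {N : vec -> R} (HN : is_norm N) (HI : reflections_isometric N).
Hypothesis (B : birkhoff N (1, 0) (0, 1)) (H10 : N (1, 0) = 1) (H01 : N (0, 1) = 1).

Lemma coord_le_norm a b : Rabs a <= N (a, b) /\ Rabs b <= 2 * N (a, b).
Proof.
  assert (Ha : Rabs a <= N (a, b)).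
  { replace (a, b) with (lincomb (1, 0) (0, 1) a b) by vec_eq.
    pose proof (birkhoff_norm_ge HN _ _ a b B) as H. rewrite H10 in H. lra. }
  split; auto.
  assert (Hb : N (0, b) = Rabs b).
  { replace (0, b) with (vscale b (0, 1)) by vec_eq. rewrite (normZ HN), H01. ring. }
  assert (Ha0 : N (a, 0) = Rabs a).
  { replace (a, 0) with (vscale a (1, 0)) by vec_eq. rewrite (normZ HN), H10. ring. }
  pose proof (norm_triangle HN (a, b) (vscale (-1) (a, 0))) as H.
  replace (vadd (a, b) (vscale (-1) (a, 0))) with (0, b) in H by vec_eq.
  rewrite Hb, (normN HN), Ha0 in H. lra.
Qed.

(* With e1 = (1,0), e2 = (0,1) and w = (al, be): T_uv for the Birkhoff pair
   u = e1 + w, v = e1 - w maps the line through w in the direction of the second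
   vector onto e1 + R e2, which avoids the open unit ball. *)
Lemma birkhoff_partner_unit al be : N (al, be) = 1 -> be <> 0 ->
  birkhoff N (al, be) ((1 - al * al) / be, - al).
Proof.
  intros Hw Hbe.
  assert (Bi : birkhoff N (vadd (1, 0) (al, be)) (vsub (1, 0) (al, be))).
  { apply (birkhoff_sum_diff HN HI); auto; intro E; vsimpl; injection E; intros; lra. }
  split; [|split].
  - intro E; injection E; intros; lra.
  - intro E; injection E as E1 E2. replace al with 0 in E1 by lra.
    assert (1 = (1 - 0 * 0) / be * be) by (field; auto). nra.
  - intros t. rewrite Hw.
    set (A := (be + t * (1 - al)) / (2 * be)). set (C := (be - (1 + al) * t) / (2 * be)).
    replace (vadd (al, be) _) with (lincomb (vadd (1, 0) (al, be)) (vsub (1, 0) (al, be)) A (- C))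
      by (unfold A, C; vec_eq).
    rewrite HI by auto.
    replace (lincomb _ _ A C) with (lincomb (1, 0) (0, 1) 1 t) by (unfold A, C; vec_eq).
    pose proof (birkhoff_norm_ge HN _ _ 1 t B). rewrite H10, Rabs_R1 in H. lra.
Qed.

Lemma eucl_sq_lipschitz p q : N p = 1 -> N q = 1 ->
  Rabs (eucl_sq p - eucl_sq q) <= 10 * N (vsub p q).
Proof.
  destruct p as [p1 p2], q as [q1 q2]. intros Hp Hq.
  pose proof (coord_le_norm p1 p2) as [Lp1 Lp2].
  pose proof (coord_le_norm q1 q2) as [Lq1 Lq2].
  unfold vsub in *; vsimpl.
  pose proof (coord_le_norm (p1 + -1 * q1) (p2 + -1 * q2)) as [Ld1 Ld2].
  set (D := N (p1 + -1 * q1, p2 + -1 * q2)) in *.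
  rewrite Hp, Hq in *. unfold eucl_sq; simpl.
  replace (p1 * p1 + p2 * p2 - (q1 * q1 + q2 * q2)) with
    ((p1 + -1 * q1) * (p1 + q1) + (p2 + -1 * q2) * (p2 + q2)) by ring.
  eapply Rle_trans; [apply Rabs_triang|]. rewrite !Rabs_mult.
  assert (Rabs (p1 + q1) <= 2) by (eapply Rle_trans; [apply Rabs_triang|lra]).
  assert (Rabs (p2 + q2) <= 4) by (eapply Rle_trans; [apply Rabs_triang|lra]).
  pose proof (Rabs_pos (p1 + -1 * q1)). pose proof (Rabs_pos (p2 + -1 * q2)).
  pose proof (Rabs_pos (p1 + q1)). pose proof (Rabs_pos (p2 + q2)).
  nra.
Qed.

Lemma eucl_sq_extrema : exists wm wM, N wm = 1 /\ N wM = 1 /\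
  forall z, N z = 1 -> eucl_sq wm <= eucl_sq z <= eucl_sq wM.
Proof.
  destruct (circle_path_lipschitz HN) as [L [HL HXL]].
  set (f := fun s => eucl_sq (circle_path N s)).
  assert (Hf : forall s t, Rabs (f s - f t) <= (10 * L) * Rabs (s - t)).
  { intros s t. eapply Rle_trans; [apply eucl_sq_lipschitz; apply (circle_path_unit HN)|].
    rewrite Rmult_assoc. apply Rmult_le_compat_l; [lra|apply HXL]. }
  destruct (continuity_ab_min f (-1) 3) as [sm [Hm _]];
    [lra|intros; eapply lipschitz_continuous; eauto|].
  destruct (continuity_ab_maj f (-1) 3) as [sM [HM _]];
    [lra|intros; eapply lipschitz_continuous; eauto|].
  exists (circle_path N sm), (circle_path N sM).
  split; [apply (circle_path_unit HN)|split; [apply (circle_path_unit HN)|]].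
  intros z Hz. destruct (circle_path_cover HN z Hz) as [s [Hs Ez]].
  replace (eucl_sq z) with (f s) by (destruct Ez as [-> | ->]; rewrite ?eucl_sq_scale; unfold f; ring).
  exact (conj (Hm s Hs) (HM s Hs)).
Qed.

Lemma eucl_sq_eq1_of_orthogonal w : N w = 1 ->
  (forall d, birkhoff N w d -> fst w * fst d + snd w * snd d = 0) -> eucl_sq w = 1.
Proof.
  destruct w as [al be]. intros Hw Horth. unfold eucl_sq; simpl.
  destruct (Req_dec be 0) as [->|Hbe].
  - replace (al, 0) with (vscale al (1, 0)) in Hw by vec_eq.
    rewrite (normZ HN), H10 in Hw. revert Hw; destruct_Rabs; nra.
  - pose proof (Horth _ (birkhoff_partner_unit al be Hw Hbe)) as S. simpl in S.
    destruct (Req_dec al 0) as [->|Hal].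
    + replace (0, be) with (vscale be (0, 1)) in Hw by vec_eq.
      rewrite (normZ HN), H01 in Hw. revert Hw; destruct_Rabs; nra.
    + assert (E : al * (1 - al * al - be * be) = 0).
      { replace (al * (1 - al * al - be * be))
          with ((al * ((1 - al * al) / be) + be * - al) * be) by (field; auto).
        rewrite S. ring. }
      destruct (Rmult_integral _ _ E); lra.
Qed.

(* Both extreme values of eucl_sq on the unit circle are 1: at a minimum, Birkhoff
   orthogonality implies Euclidean orthogonality; at a maximum, the Euclidean normal
   is Birkhoff orthogonal, hence by right uniqueness so is every Birkhoff partner. *)
Lemma norm_eq_sqrt_eucl_sq v : N v = sqrt (eucl_sq v).
Proof.
  destruct eucl_sq_extrema as [wm [wM [Hm [HM Hext]]]].
  assert (Qm : eucl_sq wm = 1).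
  { apply eucl_sq_eq1_of_orthogonal, (birkhoff_orthogonal_of_eucl_sq_min HN); auto.
    intros z Hz. apply Hext, Hz. }
  assert (QM : eucl_sq wM = 1).
  { apply eucl_sq_eq1_of_orthogonal; auto. intros d Bd.
    pose proof (birkhoff_rotation_of_eucl_sq_max HN wM HM (fun z Hz => proj2 (Hext z Hz))) as Bt.
    pose proof (birkhoff_right_unique HN HI _ _ _ Bt Bd) as D. unfold det in D; simpl in D. lra. }
  destruct (classic (v = vzero)) as [->|Hv].
  - rewrite (norm0 HN). unfold eucl_sq, vzero; simpl.
    replace (0 * 0 + 0 * 0) with 0 by ring. rewrite sqrt_0. reflexivity.
  - pose proof (norm_gt0 HN v Hv).
    pose proof (Hext _ (norm_normalize HN v Hv)) as Hn. rewrite eucl_sq_scale in Hn.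
    replace (eucl_sq v) with (N v * N v) by
      (replace (eucl_sq v) with (N v * N v * (/ N v * / N v * eucl_sq v)) by (field; lra); nra).
    rewrite sqrt_square; lra.
Qed.

End EuclideanCoordinates.

Definition lmap (x y v : vec) : vec := lincomb x y (fst v) (snd v).
Definition coords (x y u : vec) : vec := (det u y / det x y, det x u / det x y).

Lemma lmap_coords x y u : det x y <> 0 -> lmap x y (coords x y u) = u.
Proof. intros D. unfold lmap, coords; simpl. symmetry. apply cramer, D. Qed.

Definition pullback (N : vec -> R) (x y v : vec) : R := N (lmap x y v).

Section Pullback.
Context {N : vec -> R} (HN : is_norm N).

Lemma is_norm_pullback x y : birkhoff N x y -> is_norm (pullback N x y).
Proof.
  intros Bxy. split; [|split]; unfold pullback.
  - intros [v1 v2]; split; intro E.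
    + apply (norm_eq0 HN) in E.
      destruct (birkhoff_lincomb_eq0 HN x y v1 v2 Bxy E) as [-> ->]. reflexivity.
    + rewrite E. replace (lmap x y vzero) with vzero by (unfold lmap; vec_eq). apply (norm0 HN).
  - intros s v. replace (lmap x y (vscale s v)) with (vscale s (lmap x y v)) by (unfold lmap; vec_eq).
    apply (normZ HN).
  - intros u v. replace (lmap x y (vadd u v)) with (vadd (lmap x y u) (lmap x y v))
      by (unfold lmap; vec_eq).
    apply (norm_triangle HN).
Qed.

Lemma birkhoff_pullback_basis x y : birkhoff N x y -> birkhoff (pullback N x y) (1, 0) (0, 1).
Proof.
  intros Bxy. split; [intro E; injection E; lra|split; [intro E; injection E; lra|]].
  intros t. unfold pullback.
  replace (lmap x y (vadd (1, 0) (vscale t (0, 1)))) with (lincomb x y 1 t) by (unfold lmap; vec_eq).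
  replace (lmap x y (1, 0)) with x by (unfold lmap; vec_eq).
  pose proof (birkhoff_norm_ge HN _ _ 1 t Bxy) as H. rewrite Rabs_R1 in H. lra.
Qed.

Lemma reflections_isometric_pullback x y : birkhoff N x y ->
  reflections_isometric N -> reflections_isometric (pullback N x y).
Proof.
  intros Bxy HI u v a b [Hu [Hv Huv]]. unfold pullback in *.
  assert (Hlin : forall a b, lmap x y (lincomb u v a b) = lincomb (lmap x y u) (lmap x y v) a b)
    by (intros; unfold lmap; vec_eq).
  assert (Hinj : forall w, w <> vzero -> lmap x y w <> vzero).
  { intros w Hw E. apply Hw, (proj1 (is_norm_pullback x y Bxy)).
    unfold pullback. rewrite E. apply (norm0 HN). }
  rewrite !Hlin. apply HI. split; [auto|split; auto].
  intros t. specialize (Huv t).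
  replace (vadd (lmap x y u) (vscale t (lmap x y v))) with (lmap x y (vadd u (vscale t v)))
    by (unfold lmap; vec_eq).
  exact Huv.
Qed.

End Pullback.

Lemma inner_product_of_cS_values_le0 {N} (HN : is_norm N) :
  (forall d, cS_values N d -> d <= 0) -> from_inner_product N.
Proof.
  intros Hd. pose proof (reflections_isometric_of_cS_values_le0 HN Hd) as HI.
  destruct (birkhoff_exists HN (0, 1)) as [x0 B0]; [intro E; injection E; lra|].
  pose proof B0 as [Hx0 [Hy0 _]].
  assert (Bxy : birkhoff N (vscale (/ N x0) x0) (vscale (/ N (0, 1)) (0, 1))).
  { apply (birkhoff_scale HN); auto; apply Rinv_neq_0_compat, Rgt_not_eq, (norm_gt0 HN); auto. }
  pose proof (norm_normalize HN _ Hx0) as Hx. pose proof (norm_normalize HN _ Hy0) as Hy.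
  revert Bxy Hx Hy. generalize (vscale (/ N x0) x0) (vscale (/ N (0, 1)) (0, 1)).
  intros x y Bxy Hx Hy. pose proof (birkhoff_det_neq0 HN _ _ Bxy) as D.
  assert (Heucl : forall v, pullback N x y v = sqrt (eucl_sq v)).
  { apply (norm_eq_sqrt_eucl_sq (is_norm_pullback HN x y Bxy)
      (reflections_isometric_pullback HN x y Bxy HI) (birkhoff_pullback_basis HN x y Bxy));
      unfold pullback, lmap; simpl.
    - replace (lincomb x y 1 0) with x by vec_eq. exact Hx.
    - replace (lincomb x y 0 1) with y by vec_eq. exact Hy. }
  exists (fun u w => fst (coords x y u) * fst (coords x y w) + snd (coords x y u) * snd (coords x y w)).
  split; [|split; [|split; [|split]]].
  - intros; ring.
  - intros u v w. unfold coords, det in *; destruct u, v, w, x, y; vsimpl. field. auto.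
  - intros s u v. unfold coords, det in *; destruct u, v, x, y; vsimpl. field. auto.
  - intros v Hv. apply (eucl_sq_gt0 (coords x y v)). intro E. apply Hv.
    rewrite <- (lmap_coords x y v D), E. unfold lmap; vec_eq.
  - intros v. rewrite <- (lmap_coords x y v D) at 1. apply (Heucl (coords x y v)).
Qed.

(** * Rectilinear planes *)

Definition on_square (a b : R) : Prop := Rmax (Rabs a) (Rabs b) = 1.

Lemma on_square_cases a b : on_square a b ->
  Rabs a <= 1 /\ Rabs b <= 1 /\ (Rabs a = 1 \/ Rabs b = 1).
Proof. unfold on_square. destruct_Rmax; lra. Qed.

Lemma on_square_edges a b : on_square a b ->
  (a = 1 \/ a = -1) /\ -1 <= b <= 1 \/ (b = 1 \/ b = -1) /\ -1 <= a <= 1.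
Proof.
  intros H. apply on_square_cases in H as [Ha [Hb [H|H]]];
    apply Rabs_le_inv in Ha; apply Rabs_le_inv in Hb; [left|right]; split; auto;
    revert H; destruct_Rabs; lra.
Qed.

Definition sum_diff_min (N : vec -> R) (p q : vec) : R := Rmin (N (vadd p q)) (N (vsub p q)).

Section Rectilinear.
Context {N : vec -> R} (HN : is_norm N).

Lemma rectilinear_square_param : rectilinear N -> exists o u v, det u v <> 0 /\
  forall z, N z = 1 <-> exists al be, on_square al be /\ z = vadd o (lincomb u v al be).
Proof.
  intros [a [b [c [d [Had [Hdet Hs]]]]]].
  exists (vscale (1/2) (vadd a c)), (vscale (1/2) (vsub a b)), (vscale (1/2) (vsub a d)).
  assert (Hc : c = vsub (vadd b d) a) by (rewrite <- Had; vec_eq).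
  subst c. split.
  - intro E. apply Hdet. unfold det, vsub in *. destruct a, b, d; vsimpl. lra.
  - intros z. change (N z = 1) with (unit_circle N z). rewrite (Hs z). unfold segment. split.
    + intros [[t [Ht ->]]|[[t [Ht ->]]|[[t [Ht ->]]|[t [Ht ->]]]]];
        [exists (1 - 2 * t), 1|exists (-1), (1 - 2 * t)|exists (2 * t - 1), (-1)|exists 1, (2 * t - 1)];
        (split; [unfold on_square; destruct_Rmax; destruct_Rabs; lra|vec_eq]).
    + intros [al [be [Hab ->]]].
      destruct (on_square_edges al be Hab) as [[[-> | ->] Hbe]|[[-> | ->] Hal]].
      * right; right; right. exists ((be + 1) / 2). split; [lra|vec_eq].
      * right; left. exists ((1 - be) / 2). split; [lra|vec_eq].
      * left. exists ((1 - al) / 2). split; [lra|vec_eq].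
      * right; right; left. exists ((al + 1) / 2). split; [lra|vec_eq].
Qed.

(* The unit circle is symmetric about 0, so a square centred at o is also centred
   at -o: translation by 2o preserves it, which is only possible for o = 0. *)
Lemma square_param_center o u v : det u v <> 0 ->
  (forall z, N z = 1 <-> exists al be, on_square al be /\ z = vadd o (lincomb u v al be)) ->
  o = vzero.
Proof.
  intros D Hunit.
  pose proof (cramer u v o D) as Eo.
  set (g := det o v / det u v) in *. set (h := det u o / det u v) in *. clearbody g h.
  assert (Hstep : forall al be, on_square al be -> on_square (al + 2 * g) (be + 2 * h)).
  { intros al be Hab.
    assert (H1 : N (vscale (-1) (vadd o (lincomb u v al be))) = 1).
    { rewrite (normN HN). apply Hunit. eauto. }
    apply Hunit in H1 as [al' [be' [Hab' E]]].
    assert (E2 : lincomb u v (- 2 * g - al) (- 2 * h - be) = lincomb u v al' be').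
    { transitivity (vsub (vscale (-1) (vadd o (lincomb u v al be))) o); [rewrite Eo; vec_eq|].
      rewrite E. vec_eq. }
    apply lincomb_inj in E2 as [<- <-]; auto.
    unfold on_square in *. rewrite <- Hab'. f_equal; rewrite <- Rabs_Ropp; f_equal; ring. }
  assert (Hk : forall k : nat, on_square (1 + 2 * INR k * g) (2 * INR k * h)).
  { induction k as [|k IHk].
    - simpl. unfold on_square. destruct_Rmax; destruct_Rabs; lra.
    - rewrite S_INR. apply Hstep in IHk.
      replace (1 + 2 * (INR k + 1) * g) with (1 + 2 * INR k * g + 2 * g) by ring.
      replace (2 * (INR k + 1) * h) with (2 * INR k * h + 2 * h) by ring. auto. }
  assert (Hg : Rabs g <= 0).
  { apply (le0_of_nat_mul_bounded _ 1). intros k.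
    destruct (on_square_cases _ _ (Hk k)) as [H _].
    pose proof (pos_INR k). revert H. destruct_Rabs; nra. }
  assert (Hh : Rabs h <= 0).
  { apply (le0_of_nat_mul_bounded _ 1). intros k.
    destruct (on_square_cases _ _ (Hk k)) as [_ [H _]].
    pose proof (pos_INR k). revert H. destruct_Rabs; nra. }
  replace g with 0 in Eo by (revert Hg; destruct_Rabs; lra).
  replace h with 0 in Eo by (revert Hh; destruct_Rabs; lra).
  rewrite Eo. vec_eq.
Qed.

Lemma norm_max_of_unit_square u v :
  (forall al be, on_square al be -> N (lincomb u v al be) = 1) ->
  forall al be, N (lincomb u v al be) = Rmax (Rabs al) (Rabs be).
Proof.
  intros Hunit al be. set (s := Rmax (Rabs al) (Rabs be)).
  assert (Hs : 0 <= s) by (pose proof (Rabs_pos al); pose proof (Rmax_l (Rabs al) (Rabs be)); unfold s; lra).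
  destruct Hs as [Hs|Hs].
  - assert (H1 : on_square (al / s) (be / s)).
    { unfold on_square, Rdiv. rewrite !Rabs_mult, Rabs_inv, (Rabs_right s) by lra.
      rewrite !(Rmult_comm _ (/ s)), RmaxRmult by (left; apply Rinv_0_lt_compat; lra).
      fold s. field. lra. }
    apply Hunit in H1.
    replace (lincomb u v (al / s) (be / s)) with (vscale (/ s) (lincomb u v al be)) in H1 by vec_eq.
    rewrite (normZ HN), Rabs_right in H1 by (left; apply Rinv_0_lt_compat; lra).
    apply (Rmult_eq_reg_l (/ s)); [rewrite H1; field; lra|apply Rinv_neq_0_compat; lra].
  - assert (al = 0 /\ be = 0) as [-> ->].
    { unfold s in Hs. revert Hs. destruct_Rmax; destruct_Rabs; lra. }
    replace (lincomb u v 0 0) with vzero by vec_eq. rewrite (norm0 HN). exact Hs.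
Qed.

Lemma rectilinear_max_coords : rectilinear N ->
  exists u v, forall al be, N (lincomb u v al be) = Rmax (Rabs al) (Rabs be).
Proof.
  intros HR. destruct (rectilinear_square_param HR) as [o [u [v [D Hunit]]]].
  pose proof (square_param_center o u v D Hunit) as ->.
  exists u, v. apply norm_max_of_unit_square. intros al be Hab.
  apply Hunit. exists al, be. split; auto. vec_eq.
Qed.

(* In max coordinates x = u + v is Birkhoff orthogonal to y = u, and T_xy maps the
   unit vectors v - u and u + v / 3 to 3 u + v and (v - u) / 3. *)
Lemma cS_values_8_3_of_rectilinear : rectilinear N -> cS_values N (8 / 3).
Proof.
  intros HR. destruct (rectilinear_max_coords HR) as [u [v Hn]].
  set (x := lincomb u v 1 1). set (y := lincomb u v 1 0).
  assert (Hl : forall a b, lincomb x y a b = lincomb u v (a + b) a) by (intros; unfold x, y; vec_eq).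
  assert (Hb : birkhoff N x y).
  { split; [|split].
    - intro E. apply (f_equal N) in E. unfold x in E. rewrite Hn, (norm0 HN) in E.
      revert E. destruct_Rmax; destruct_Rabs; lra.
    - intro E. apply (f_equal N) in E. unfold y in E. rewrite Hn, (norm0 HN) in E.
      revert E. destruct_Rmax; destruct_Rabs; lra.
    - intros t. replace (vadd x (vscale t y)) with (lincomb x y 1 t) by (unfold x, y; vec_eq).
      rewrite Hl, Hn. unfold x. rewrite Hn. destruct_Rmax; destruct_Rabs; lra. }
  assert (HT : forall r, T_norms N x y r <->
    exists a b, Rmax (Rabs (a + b)) (Rabs a) = 1 /\ r = Rmax (Rabs (a - b)) (Rabs a)).
  { intros r. rewrite T_norms_iff. split; intros [a [b [H1 H2]]]; exists a, b;
      rewrite ?Hl, ?Hn in *; replace (a + - b) with (a - b) in * by ring; auto. }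
  exists x, y. split; auto. exists 3, (1 / 3). split; [|split].
  - split.
    + intros r Hr. apply HT in Hr as [a [b [H1 ->]]]. revert H1. destruct_Rmax; destruct_Rabs; lra.
    + intros b Hbd. apply Hbd, HT. exists 1, (-2). split; destruct_Rmax; destruct_Rabs; lra.
  - split.
    + intros r Hr. apply HT in Hr as [a [b [H1 ->]]]. revert H1. destruct_Rmax; destruct_Rabs; lra.
    + intros b Hbd. apply Hbd, HT. exists (1 / 3), (2 / 3). split; destruct_Rmax; destruct_Rabs; lra.
  - lra.
Qed.

Lemma T_norms_near_3 d e : 0 < e -> cS_values N d -> 8 / 3 - e / 4 <= d ->
  exists x y r, birkhoff N x y /\ T_norms N x y r /\ 3 - e / 2 < r.
Proof.
  intros He [x [y [Bxy [M [m [HM [Hm ->]]]]]]] Hd.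
  destruct (T_norms_lub_glb_bounds HN x y M m Bxy HM Hm) as [[HM1 HM3] [[Hm1 _] _]].
  assert (H3 : / 3 <= / M) by (apply Rinv_le_contravar; lra).
  replace (/ 3) with (1 / 3) in H3 by field.
  exists x, y. apply NNPP. intro Hn.
  assert (M <= M - e / 4); [|lra].
  apply (proj2 HM). intros r Hr. apply Rnot_lt_le. intro Hlt. apply Hn.
  exists r. split; [exact Bxy|split; [exact Hr|lra]].
Qed.

Lemma birkhoff_unit_direction x y a : birkhoff N x y -> a <> 0 ->
  exists x', N x' = 1 /\ birkhoff N x' y /\ vscale a x = vscale (Rabs a * N x) x'.
Proof.
  intros Bxy Ha. pose proof (norm_gt0 HN x (proj1 Bxy)) as Hnx.
  pose proof (Rabs_pos_lt a Ha) as Hpa.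
  assert (Hs : a / (Rabs a * N x) <> 0).
  { unfold Rdiv. apply Rmult_integral_contrapositive_currified; auto.
    apply Rinv_neq_0_compat. nra. }
  exists (vscale (a / (Rabs a * N x)) x). split; [|split].
  - rewrite (normZ HN). unfold Rdiv.
    rewrite Rabs_mult, Rabs_inv, Rabs_mult, (Rabs_right (N x)), (Rabs_right (Rabs a)) by lra.
    field; lra.
  - pose proof (birkhoff_scale HN x y _ 1 Bxy Hs ltac:(lra)) as B.
    replace (vscale 1 y) with y in B by vec_eq. exact B.
  - vec_eq.
Qed.

(* With A = |a| N(x) <= 1, the bound N(a x - b y) <= 2A + 1 forces A close to 1, so
   that a x is close to the unit vector x' along x; then x' + v and x' - v are
   both nearly of norm 2. *)
Lemma near_unit_pair x y a b e : 0 < e <= 1 -> birkhoff N x y ->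
  N (lincomb x y a b) = 1 -> 3 - e / 2 < N (lincomb x y a (- b)) ->
  exists p q, N p = 1 /\ N q = 1 /\ 2 - e <= N (vadd p q) /\ 2 - e <= N (vsub p q).
Proof.
  intros He Bxy Hv Hr.
  set (A := Rabs a * N x).
  assert (HA1 : A <= 1) by (pose proof (birkhoff_norm_ge HN x y a b Bxy); unfold A; lra).
  assert (HrA : N (lincomb x y a (- b)) <= 2 * A + 1).
  { replace (lincomb x y a (- b)) with (vadd (vscale (2 * a) x) (vscale (-1) (lincomb x y a b)))
      by vec_eq.
    eapply Rle_trans; [apply (norm_triangle HN)|].
    rewrite (normN HN), (normZ HN), Hv, Rabs_mult, (Rabs_right 2) by lra. unfold A. lra. }
  assert (HA : 1 - e / 4 <= A) by lra.
  assert (Ha : a <> 0) by (intros ->; unfold A in HA; rewrite Rabs_R0 in HA; lra).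
  destruct (birkhoff_unit_direction x y a Bxy Ha) as [x' [Nx' [B' Eax]]]. fold A in Eax.
  set (v := lincomb x y a b).
  exists x', v. repeat split; auto.
  - replace (vadd x' v) with (lincomb x' y (1 + A) b)
      by (unfold v, lincomb; rewrite Eax; vec_eq).
    pose proof (birkhoff_norm_ge HN x' y (1 + A) b B') as H.
    rewrite Nx', Rabs_right in H by lra. lra.
  - assert (H1 : N (lincomb x y a (- b)) <= 2 * (1 - A) + N (vsub (vscale 2 x') v)).
    { replace (lincomb x y a (- b)) with
        (vadd (vscale (2 * (A - 1)) x') (vsub (vscale 2 x') v))
        by (unfold v, lincomb; rewrite Eax; vec_eq).
      eapply Rle_trans; [apply (norm_triangle HN)|].
      rewrite (normZ HN), Nx', Rabs_left1 by lra. lra. }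
    assert (H2 : N (vsub (vscale 2 x') v) <= 1 + N (vsub x' v)).
    { replace (vsub (vscale 2 x') v) with (vadd x' (vsub x' v)) by vec_eq.
      pose proof (norm_triangle HN x' (vsub x' v)). lra. }
    lra.
Qed.

Lemma sum_diff_min_opp_l p q : sum_diff_min N (vscale (-1) p) q = sum_diff_min N p q.
Proof.
  unfold sum_diff_min. rewrite Rmin_comm.
  replace (vadd (vscale (-1) p) q) with (vscale (-1) (vsub p q)) by vec_eq.
  replace (vsub (vscale (-1) p) q) with (vscale (-1) (vadd p q)) by vec_eq.
  rewrite !(normN HN). reflexivity.
Qed.

Lemma sum_diff_min_opp_r p q : sum_diff_min N p (vscale (-1) q) = sum_diff_min N p q.
Proof.
  unfold sum_diff_min. rewrite Rmin_comm.
  replace (vadd p (vscale (-1) q)) with (vsub p q) by vec_eq.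
  replace (vsub p (vscale (-1) q)) with (vadd p q) by vec_eq. reflexivity.
Qed.

Lemma sum_diff_min_lipschitz p q p' q' :
  Rabs (sum_diff_min N p q - sum_diff_min N p' q') <= N (vsub p p') + N (vsub q q').
Proof.
  pose proof (norm_triangle HN (vsub p p') (vsub q q')) as H1.
  pose proof (norm_triangle HN (vsub p p') (vscale (-1) (vsub q q'))) as H2.
  rewrite (normN HN) in H2.
  pose proof (norm_dist_ge HN (vadd p q) (vadd p' q')) as H3.
  pose proof (norm_dist_ge HN (vsub p q) (vsub p' q')) as H4.
  replace (vsub (vadd p q) (vadd p' q')) with (vadd (vsub p p') (vsub q q')) in H3 by vec_eq.
  replace (vsub (vsub p q) (vsub p' q')) with (vadd (vsub p p') (vscale (-1) (vsub q q'))) in H4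
    by vec_eq.
  unfold sum_diff_min, Rmin. repeat destruct Rle_dec; destruct_Rabs; lra.
Qed.

Lemma unit_pair_of_near_unit_pairs :
  (forall e, 0 < e <= 1 -> exists p q,
     N p = 1 /\ N q = 1 /\ 2 - e <= N (vadd p q) /\ 2 - e <= N (vsub p q)) ->
  exists p q, N p = 1 /\ N q = 1 /\ 2 <= N (vadd p q) /\ 2 <= N (vsub p q).
Proof.
  intros Hnear.
  destruct (circle_path_lipschitz HN) as [L [HL HXL]].
  set (G := fun s t => sum_diff_min N (circle_path N s) (circle_path N t)).
  destruct (lipschitz2_attains_max G L (-1) 3) as [s0 [t0 [_ [_ Hmax]]]]; [lra|auto| |].
  { intros s s' t t'. eapply Rle_trans; [apply sum_diff_min_lipschitz|].
    pose proof (HXL s s'). pose proof (HXL t t'). lra. }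
  assert (HG : 2 <= G s0 t0).
  { apply Rnot_lt_le. intro Hlt. set (e := Rmin 1 ((2 - G s0 t0) / 2)).
    assert (He : 0 < e <= 1 /\ e < 2 - G s0 t0) by (unfold e, Rmin; destruct Rle_dec; lra).
    destruct (Hnear e) as [p [q [Hp [Hq [H1 H2]]]]]; [lra|].
    destruct (circle_path_cover HN p Hp) as [s [Hs Ep]].
    destruct (circle_path_cover HN q Hq) as [t [Ht Eq]].
    assert (E : sum_diff_min N p q = G s t).
    { unfold G. destruct Ep as [-> | ->], Eq as [-> | ->];
        rewrite ?sum_diff_min_opp_l, ?sum_diff_min_opp_r; reflexivity. }
    assert (2 - e <= sum_diff_min N p q) by (unfold sum_diff_min, Rmin; destruct Rle_dec; lra).
    specialize (Hmax s t Hs Ht). lra. }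
  exists (circle_path N s0), (circle_path N t0). rewrite !(circle_path_unit HN).
  unfold G, sum_diff_min, Rmin in HG. destruct Rle_dec; repeat split; lra.
Qed.

Lemma unit_segment a b l :
  N a = 1 -> N b = 1 -> N (vscale (1/2) (vadd a b)) = 1 -> 0 <= l <= 1 ->
  N (vadd (vscale l a) (vscale (1 - l) b)) = 1.
Proof.
  assert (Hge : forall a b l, N b = 1 -> N (vscale (1/2) (vadd a b)) = 1 -> 1/2 <= l <= 1 ->
    1 <= N (vadd (vscale l a) (vscale (1 - l) b))).
  { intros a' b' l' Hb Hm Hl. set (r := vadd (vscale l' a') (vscale (1 - l') b')).
    replace (vscale (1/2) (vadd a' b')) with (vadd (vscale (/ (2 * l')) r) (vscale (1 - / (2 * l')) b'))
      in Hm by (unfold r; vec_eq).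
    pose proof (norm_triangle HN (vscale (/ (2 * l')) r) (vscale (1 - / (2 * l')) b')) as H.
    assert (0 < / (2 * l') <= 1).
    { split; [apply Rinv_0_lt_compat; lra|]. rewrite <- Rinv_1. apply Rinv_le_contravar; lra. }
    rewrite Hm, !(normZ HN), Hb, !Rabs_right in H by lra.
    apply (Rmult_le_reg_l (/ (2 * l'))); lra. }
  intros Ha Hb Hm Hl. apply Rle_antisym.
  - eapply Rle_trans; [apply (norm_triangle HN)|]. rewrite !(normZ HN), Ha, Hb, !Rabs_right; lra.
  - destruct (Rle_dec (1/2) l); [apply Hge; auto; lra|].
    replace (vadd (vscale l a) (vscale (1 - l) b)) with (vadd (vscale (1 - l) b) (vscale (1 - (1 - l)) a))
      by vec_eq.
    apply Hge; auto; [|lra]. replace (vadd b a) with (vadd a b) by vec_eq. exact Hm.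
Qed.

Lemma det_neq0_of_max_coords u v :
  (forall al be, N (lincomb u v al be) = Rmax (Rabs al) (Rabs be)) -> det u v <> 0.
Proof.
  intros Hn D.
  assert (Hz : forall al be, lincomb u v al be = vzero -> al = 0 /\ be = 0).
  { intros al be E. apply (f_equal N) in E. rewrite Hn, (norm0 HN) in E.
    revert E. destruct_Rmax; destruct_Rabs; lra. }
  assert (Hu : N (lincomb u v 1 0) = 1) by (rewrite Hn; destruct_Rmax; destruct_Rabs; lra).
  destruct u as [u1 u2], v as [v1 v2]. unfold det in D; simpl in D.
  destruct (Hz v2 (- u2)) as [_ H2]; [unfold lincomb; vsimpl; apply pair_eq; nra|].
  destruct (Hz v1 (- u1)) as [_ H1]; [unfold lincomb; vsimpl; apply pair_eq; nra|].
  replace (lincomb (u1, u2) (v1, v2) 1 0) with vzero in Hu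
    by (unfold lincomb; vsimpl; apply pair_eq; lra).
  rewrite (norm0 HN) in Hu. lra.
Qed.

Lemma rectilinear_of_max_coords u v :
  (forall al be, N (lincomb u v al be) = Rmax (Rabs al) (Rabs be)) -> rectilinear N.
Proof.
  intros Hn. pose proof (det_neq0_of_max_coords u v Hn) as D.
  exists (lincomb u v 1 1), (lincomb u v (-1) 1), (lincomb u v (-1) (-1)), (lincomb u v 1 (-1)).
  split; [vec_eq|split].
  - unfold det in *. destruct u, v; unfold lincomb in *; vsimpl. intro E. apply D. nra.
  - intros z. unfold unit_circle, segment. split.
    + intros Hz. pose proof (cramer u v z D) as Ez.
      set (al := det z v / det u v) in *. set (be := det u z / det u v) in *. clearbody al be.
      rewrite Ez, Hn in Hz. rewrite Ez.
      destruct (on_square_edges al be Hz) as [[[-> | ->] Hbe]|[[-> | ->] Hal]].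
      * right; right; right. exists ((be + 1) / 2). split; [lra|vec_eq].
      * right; left. exists ((1 - be) / 2). split; [lra|vec_eq].
      * left. exists ((1 - al) / 2). split; [lra|vec_eq].
      * right; right; left. exists ((al + 1) / 2). split; [lra|vec_eq].
    + intros [[t [Ht ->]]|[[t [Ht ->]]|[[t [Ht ->]]|[t [Ht ->]]]]];
        [ replace (vadd _ _) with (lincomb u v (1 - 2 * t) 1) by vec_eq
        | replace (vadd _ _) with (lincomb u v (-1) (1 - 2 * t)) by vec_eq
        | replace (vadd _ _) with (lincomb u v (2 * t - 1) (-1)) by vec_eq
        | replace (vadd _ _) with (lincomb u v 1 (2 * t - 1)) by vec_eq ];
        rewrite Hn; destruct_Rmax; destruct_Rabs; lra.
Qed.

Lemma rectilinear_of_unit_pair p q :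
  N p = 1 -> N q = 1 -> 2 <= N (vadd p q) -> 2 <= N (vsub p q) -> rectilinear N.
Proof.
  intros Hp Hq H1 H2.
  assert (E1 : N (vadd p q) = 2).
  { apply Rle_antisym; auto. eapply Rle_trans; [apply (norm_triangle HN)|lra]. }
  assert (E2 : N (vsub p q) = 2).
  { apply Rle_antisym; auto. eapply Rle_trans; [apply (norm_triangle HN)|]. rewrite (normN HN). lra. }
  set (u := vscale (1/2) (vsub p q)). set (v := vscale (1/2) (vadd p q)).
  assert (Nu : N u = 1) by (unfold u; rewrite (normZ HN), E2, Rabs_right; lra).
  assert (Nv : N v = 1) by (unfold v; rewrite (normZ HN), E1, Rabs_right; lra).
  assert (Hp' : N (lincomb u v 1 1) = 1) by (replace (lincomb u v 1 1) with p by (unfold u, v; vec_eq); auto).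
  assert (Hq' : N (lincomb u v (-1) 1) = 1) by (replace (lincomb u v (-1) 1) with q by (unfold u, v; vec_eq); auto).
  clearbody u v.
  assert (Hedge_v : forall al, -1 <= al <= 1 -> N (lincomb u v al 1) = 1).
  { intros al Hal.
    replace (lincomb u v al 1) with
      (vadd (vscale ((1 + al) / 2) (lincomb u v 1 1)) (vscale (1 - (1 + al) / 2) (lincomb u v (-1) 1)))
      by vec_eq.
    apply unit_segment; auto; [|lra].
    replace (vscale (1 / 2) _) with v by vec_eq. auto. }
  assert (Hedge_u : forall be, -1 <= be <= 1 -> N (lincomb u v (-1) be) = 1).
  { intros be Hbe.
    replace (lincomb u v (-1) be) with
      (vadd (vscale ((1 + be) / 2) (lincomb u v (-1) 1))
            (vscale (1 - (1 + be) / 2) (vscale (-1) (lincomb u v 1 1)))) by vec_eq.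
    apply unit_segment; auto; [rewrite (normN HN); auto| |lra].
    replace (vscale (1 / 2) _) with (vscale (-1) u) by vec_eq. rewrite (normN HN). auto. }
  apply (rectilinear_of_max_coords u v), norm_max_of_unit_square.
  intros al be Hab. destruct (on_square_edges al be Hab) as [[[-> | ->] Hbe]|[[-> | ->] Hal]].
  - replace (lincomb u v 1 be) with (vscale (-1) (lincomb u v (-1) (- be))) by vec_eq.
    rewrite (normN HN). apply Hedge_u. lra.
  - apply Hedge_u. lra.
  - apply Hedge_v. lra.
  - replace (lincomb u v al (-1)) with (vscale (-1) (lincomb u v (- al) 1)) by vec_eq.
    rewrite (normN HN). apply Hedge_v. lra.
Qed.

Lemma rectilinear_of_cS_values_near :
  (forall eps, 0 < eps -> exists d, cS_values N d /\ 8 / 3 - eps <= d) -> rectilinear N.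
Proof.
  intros Hnear.
  destruct unit_pair_of_near_unit_pairs as [p [q [Hp [Hq [H1 H2]]]]].
  - intros e He. destruct (Hnear (e / 4)) as [d [Hd Hde]]; [lra|].
    destruct (T_norms_near_3 d e) as [x [y [r [Bxy [Hr Hr3]]]]]; [lra|auto|auto|].
    apply T_norms_iff in Hr as [a [b [Hv ->]]].
    apply (near_unit_pair x y a b e); auto.
  - apply (rectilinear_of_unit_pair p q); auto.
Qed.

End Rectilinear.

Lemma is_lub_approx (E : R -> Prop) c eps : is_lub E c -> 0 < eps -> exists d, E d /\ c - eps < d.
Proof.
  intros [_ Hc] Heps. apply NNPP. intros Hn.
  assert (c <= c - eps); [|lra].
  apply Hc. intros d Hd. apply Rnot_lt_le. intro Hlt. apply Hn. exists d. auto.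
Qed.

Theorem theorem5p1 (N : vec -> R) (HN : is_norm N) :
  exists c : R, is_cS N c /\
    0 <= c <= 8 / 3 /\
    (c = 0 <-> from_inner_product N) /\
    (c = 8 / 3 <-> rectilinear N).
Proof.
  destruct (completeness (cS_values N)) as [c Hlub].
  { exists (8 / 3). intros d Hd. apply (cS_values_bounds HN d Hd). }
  { apply (cS_values_inhabited HN). }
  exists c. split; [exact Hlub|]. destruct Hlub as [Hub Hleast].
  assert (Hc : 0 <= c <= 8 / 3).
  { destruct (cS_values_inhabited HN) as [d0 Hd0].
    pose proof (cS_values_bounds HN d0 Hd0). pose proof (Hub d0 Hd0).
    assert (c <= 8 / 3) by (apply Hleast; intros d Hd; apply (cS_values_bounds HN d Hd)).
    lra. }
  split; [exact Hc|split; split].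
  - intros ->. apply (inner_product_of_cS_values_le0 HN), Hub.
  - intros Hip. apply Rle_antisym; [|apply Hc]. apply Hleast. intros d Hd.
    rewrite (cS_values_eq0_of_inner_product HN d Hip Hd). lra.
  - intros Hc83. apply (rectilinear_of_cS_values_near HN). intros eps Heps.
    destruct (is_lub_approx (cS_values N) c eps (conj Hub Hleast) Heps) as [d [Hd Hlt]].
    exists d. split; [exact Hd|lra].
  - intros HR. apply Rle_antisym; [apply Hc|]. apply Hub, (cS_values_8_3_of_rectilinear HN HR).
Qed.
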